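(* Let $R$ be a generalized Krull domain and let $S$ be an overring of $R$ such that $R \subseteq S$ satisfies going-down. Let $\Delta$ be the set of height one primes $\mathfrak{p}$ of $R$ with $\mathfrak{p}S \neq S$. Then $S = \bigcap_{\mathfrak{p} \in \Delta} R_{\mathfrak{p}}$.
   Context: All rings are commutative with identity; an overring of a domain $R$ is a ring between $R$ and its fraction field. A ring extension $A \subseteq B$ satisfies going-down if whenever $\mathfrak{p} \subset \mathfrak{q}$ are primes of $A$ and $Q$ is a prime of $B$ with $Q \cap A = \mathfrak{q}$, there is a prime $P \subseteq Q$ of $B$ with $P \cap A = \mathfrak{p}$. A domain $R$ is a generalized Krull domain if (1) $R = \bigcap R_{\mathfrak{p}}$ over all height one primes $\mathfrak{p}$ of $R$, (2) every nonzero element of $R$ lies in only finitely many height one primes, and (3) $R_{\mathfrak{p}}$ is a valuation domain for every height one prime $\mathfrak{p}$. *)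

From HB Require Import structures.
From mathcomp Require Import all_boot all_order all_algebra.
Set Implicit Arguments. Unset Strict Implicit. Unset Printing Implicit Defensive.
Import GRing.Theory.
Local Open Scope ring_scope.

(* Rings are modelled as subrings of a fixed field K (the fraction field).
   Subsets of K are predicates K -> Prop. *)
Section Defs.
Variable K : fieldType.

Definition subring (A : K -> Prop) : Prop :=
  [/\ A 0, A 1, (forall x y, A x -> A y -> A (x - y))
    & (forall x y, A x -> A y -> A (x * y))].

Definition frac_field_of (R : K -> Prop) : Prop :=
  forall x : K, exists a b, [/\ R a, R b, b != 0 & x = a / b].

Definition overring (R S : K -> Prop) : Prop :=
  subring S /\ (forall x, R x -> S x).

Definition is_ideal (A I : K -> Prop) : Prop :=
  [/\ (forall x, I x -> A x), I 0,
      (forall x y, I x -> I y -> I (x + y))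
    & (forall a x, A a -> I x -> I (a * x))].

Definition prime_ideal (A P : K -> Prop) : Prop :=
  [/\ is_ideal A P, ~ P 1
    & forall x y, A x -> A y -> P (x * y) -> P x \/ P y].

Definition height_one (A P : K -> Prop) : Prop :=
  [/\ prime_ideal A P, (exists x, P x /\ x != 0)
    & forall Q, prime_ideal A Q -> (forall x, Q x -> P x) ->
        (forall x, Q x -> x = 0) \/ (forall x, P x -> Q x)].

Definition localization (A P : K -> Prop) (x : K) : Prop :=
  exists a b, [/\ A a, A b, ~ P b & x = a / b].

Definition valuation_domain (V : K -> Prop) : Prop :=
  forall x : K, x != 0 -> V x \/ V x^-1.

(* the extended ideal P S is proper: 1 is not a finite sum of p_i s_i *)
Definition ext_proper (S P : K -> Prop) : Prop :=
  ~ exists (n : nat) (p s : 'I_n -> K),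
      [/\ forall i, P (p i), forall i, S (s i) & \sum_(i < n) p i * s i = 1].

Definition going_down (R S : K -> Prop) : Prop :=
  forall p q Q : K -> Prop,
    prime_ideal R p -> prime_ideal R q -> (forall x, p x -> q x) ->
    prime_ideal S Q -> (forall x, (Q x /\ R x) <-> q x) ->
    exists P : K -> Prop,
      [/\ prime_ideal S P, (forall x, P x -> Q x)
        & forall x, (P x /\ R x) <-> p x].

Definition generalized_Krull (R : K -> Prop) : Prop :=
  [/\ (forall x, (forall P, height_one R P -> localization R P x) -> R x),
      (forall x, R x -> x != 0 -> exists (n : nat) (f : nat -> K -> Prop),
          forall P, height_one R P -> P x ->
            exists2 i, (i < n)%N & forall y, P y <-> f i y)
    & (forall P, height_one R P -> valuation_domain (localization R P))].

End Defs.

(* If pS <> S, going-down yields a prime P of S with P ∩ R = p; an x in S outside the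
   valuation ring R_p would have x^-1 = a/b with a in p and b not in p, and then
   b = a x lies in P ∩ R = p, which is absurd.
   Conversely, if x is not in S, the conductor (S :_S x) lies in a prime M of S.
   Write x = a/b.  For each of the finitely many height one primes P containing b,
   either P ⊆ M, so that PS <> S and x is in R_P, or some d in P \ M satisfies
   d^k x in R_P because P is the radical of every nonzero ideal of R_P.  The product
   c of these multipliers avoids M and c x lies in every R_P, hence in R ⊆ S; so c is
   in the conductor, hence in M, a contradiction. *)

From mathcomp Require Import all_boot all_order all_algebra.
From mathcomp Require boolp classical_sets.
From mathcomp Require Import ring.
From Stdlib Require Import Classical.
Set Implicit Arguments. Unset Strict Implicit. Unset Printing Implicit Defensive.
Import GRing.Theory.
Local Open Scope ring_scope.

Lemma common_multiplier (T : comNzRingType) (N : T -> Prop) (Q : nat -> T -> Prop)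
    (n : nat) :
  N 1 -> (forall c d, N c -> N d -> N (c * d)) ->
  (forall i c d, N d -> Q i c -> Q i (d * c)) ->
  (forall i, (i < n)%N -> exists c, N c /\ Q i c) ->
  exists c, N c /\ forall i, (i < n)%N -> Q i c.
Proof.
move=> N1 NM QM; elim: n => [|n IH] hQ; first by exists 1.
have [c [Nc Qc]] := IH (fun i lt_in => hQ i (ltnW lt_in)).
have [d [Nd Qd]] := hQ n (ltnSn n).
exists (d * c); split => [|i]; first exact: NM.
rewrite ltnS leq_eqVlt => /orP [/eqP -> | lt_in]; last exact: QM (Qc i lt_in).
by rewrite mulrC; apply: QM.
Qed.

Section IdealsInAField.
Variable K : fieldType.
Implicit Types (A R S I J P M p : K -> Prop) (x y a b c d r s z w : K).

Lemma subring0 A : subring A -> A 0.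
Proof. by case. Qed.

Lemma subring1 A : subring A -> A 1.
Proof. by case. Qed.

Lemma subringB A x y : subring A -> A x -> A y -> A (x - y).
Proof. by case=> _ _ h _; apply: h. Qed.

Lemma subringM A x y : subring A -> A x -> A y -> A (x * y).
Proof. by case=> _ _ _ h; apply: h. Qed.

Lemma subringD A x y : subring A -> A x -> A y -> A (x + y).
Proof.
move=> hA hx hy; rewrite -[y]opprK -[- y]sub0r.
by apply: subringB => //; apply: subringB => //; apply: subring0.
Qed.

Lemma subringX A x k : subring A -> A x -> A (x ^+ k).
Proof.
move=> hA hx; elim: k => [|k IH]; first by rewrite expr0; apply: subring1.
by rewrite exprS; apply: subringM.
Qed.

Lemma ideal_sub A I x : is_ideal A I -> I x -> A x.
Proof. by case=> h _ _ _; apply: h. Qed.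

Lemma ideal0 A I : is_ideal A I -> I 0.
Proof. by case. Qed.

Lemma idealD A I x y : is_ideal A I -> I x -> I y -> I (x + y).
Proof. by case=> _ _ h _; apply: h. Qed.

Lemma idealM A I a x : is_ideal A I -> A a -> I x -> I (a * x).
Proof. by case=> _ _ _ h; apply: h. Qed.

Lemma idealMr A I a x : is_ideal A I -> A a -> I x -> I (x * a).
Proof. by rewrite mulrC; apply: idealM. Qed.

Lemma ideal_sum A I n (F : 'I_n -> K) :
  is_ideal A I -> (forall i, I (F i)) -> I (\sum_(i < n) F i).
Proof.
move=> hI hF; apply: (big_ind I) => [|u v|i _]; [exact: ideal0 hI|exact: idealD hI|exact: hF].
Qed.

Lemma prime_notinX A P r k :
  subring A -> prime_ideal A P -> A r -> ~ P r -> ~ P (r ^+ k).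
Proof.
move=> hA [_ nP1 hPM] hr nPr; elim: k => [|k IH]; first by rewrite expr0.
by rewrite exprS => /(hPM _ _ hr (subringX k hA hr)) [].
Qed.

Lemma prime_notin_neq0 A P b : prime_ideal A P -> ~ P b -> b != 0.
Proof. by case=> hI _ _ nPb; apply: contra_notN nPb => /eqP ->; apply: ideal0 hI. Qed.

Lemma localization_sub R P r :
  subring R -> prime_ideal R P -> R r -> localization R P r.
Proof. by move=> hR [] *; exists r, 1; split; rewrite ?divr1 //; apply: subring1. Qed.

Lemma localization_ext R P P' z :
  (forall y, P y <-> P' y) -> localization R P' z -> localization R P z.
Proof. by move=> eP [a [b [ha hb nP'b ->]]]; exists a, b; split => // /eP. Qed.

Lemma localizationM R P x y :
  subring R -> prime_ideal R P -> localization R P x -> localization R P y ->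
  localization R P (x * y).
Proof.
move=> hR [_ _ hPM] [a [b [ha hb nb ->]]] [a' [b' [ha' hb' nb' ->]]].
exists (a * a'), (b * b'); split; [exact: subringM|exact: subringM| |exact: mulf_div].
by case/hPM.
Qed.

Lemma localizationD R P x y :
  subring R -> prime_ideal R P -> localization R P x -> localization R P y ->
  localization R P (x + y).
Proof.
move=> hR hP [a [b [ha hb nb ->]]] [a' [b' [ha' hb' nb' ->]]].
exists (a * b' + a' * b), (b * b'); split.
- by apply: subringD => //; apply: subringM.
- exact: subringM.
- by case: hP => _ _ hPM /(hPM _ _ hb hb') [].
- by rewrite addf_div //; apply: prime_notin_neq0 hP _.
Qed.

Lemma localizationX R P x k :
  subring R -> prime_ideal R P -> localization R P x -> localization R P (x ^+ k).
Proof.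
move=> hR hP hx; elim: k => [|k IH].
  by rewrite expr0; apply: localization_sub => //; apply: subring1.
by rewrite exprS; apply: localizationM.
Qed.

Lemma localizationV R P b :
  subring R -> prime_ideal R P -> R b -> ~ P b -> localization R P b^-1.
Proof. by move=> hR hP hb nb; exists 1, b; split; rewrite ?div1r //; apply: subring1. Qed.

Lemma valuation_comparable R p r s :
  valuation_domain (localization R p) -> r != 0 -> s != 0 ->
  exists2 t, localization R p t & r = t * s \/ s = t * r.
Proof.
move=> hv r0 s0; have /hv [h|h] : r / s != 0 by rewrite mulf_neq0 ?invr_eq0.
- by exists (r / s) => //; left; rewrite divfK.
- by exists (s / r); [rewrite -invf_div | right; rewrite divfK].
Qed.

(* That is, [x^-1 = a / b] lies in the maximal ideal of [R_p]. *)
Lemma valuation_notin_inv R p x :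
  subring R -> prime_ideal R p -> valuation_domain (localization R p) ->
  ~ localization R p x -> exists a b, [/\ R a, p a, R b, ~ p b & a * x = b].
Proof.
move=> hR hp hv nx.
have x0 : x != 0.
  by apply: contra_notN nx => /eqP ->; apply: localization_sub => //; apply: subring0.
have [/nx //|[a [b [ha hb nb ex]]]] := hv x x0.
have a0 : a != 0.
  by apply: contra_eq_neq ex => ->; rewrite mul0r invr_eq0.
have eb : a * x = b by rewrite -[x]invrK ex invf_div mulrC divfK.
exists a, b; split => //; apply: NNPP => nPa; apply: nx.
by rewrite -[x]invrK ex invf_div; apply: localizationM;
  [| |apply: localization_sub|apply: localizationV].
Qed.

Definition adjoin_ideal A I z w := exists m s, [/\ I m, A s & w = m + z * s].

Lemma adjoin_ideal_is_ideal A I z :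
  subring A -> is_ideal A I -> A z -> is_ideal A (adjoin_ideal A I z).
Proof.
move=> hA hI hz; split.
- move=> w [m [s [hm hs ->]]].
  by apply: subringD => //; [apply: ideal_sub hI hm | apply: subringM].
- exists 0, 0; split; rewrite ?mulr0 ?addr0 //; [exact: ideal0 hI|exact: subring0].
- move=> w w' [m [s [hm hs ->]]] [m' [s' [hm' hs' ->]]].
  exists (m + m'), (s + s'); split; [exact: idealD hI hm hm'|exact: subringD|].
  by rewrite mulrDr addrACA.
- move=> a w ha [m [s [hm hs ->]]]; exists (a * m), (a * s); split.
  + exact: idealM hI ha hm.
  + exact: subringM.
  + by rewrite mulrDr mulrCA.
Qed.

Lemma adjoin_ideal_sub A I z w : subring A -> I w -> adjoin_ideal A I z w.
Proof. by move=> hA Iw; exists w, 0; rewrite mulr0 addr0; split=> //; apply: subring0. Qed.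

Lemma adjoin_ideal_mem A I z : subring A -> is_ideal A I -> adjoin_ideal A I z z.
Proof.
by move=> hA hI; exists 0, 1; rewrite mulr1 add0r; split=> //; [apply: ideal0 hI|apply: subring1].
Qed.

Definition proper_ideal_over A J I := [/\ is_ideal A I, ~ I 1 & forall x, J x -> I x].

Lemma proper_ideal_over_chain A J (F : (K -> Prop) -> Prop) :
  (forall I, F I -> proper_ideal_over A J I) ->
  classical_sets.total_on F classical_sets.subset -> (exists I, F I) ->
  proper_ideal_over A J (classical_sets.bigcup F id).
Proof.
move=> FP Ftot [I0 FI0]; split; last 2 first.
- by case=> I FI I1; case: (FP I FI).
- by move=> x Jx; exists I0 => //; case: (FP I0 FI0) => _ _; apply.
split.
- by move=> x [I FI Ix]; case: (FP I FI) => hI _ _; apply: ideal_sub hI Ix.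
- by exists I0 => //; case: (FP I0 FI0) => hI _ _; apply: ideal0 hI.
- move=> x y [I FI Ix] [I' FI' I'y].
  have [hI _ _] := FP I FI; have [hI' _ _] := FP I' FI'.
  case: (Ftot I I' FI FI') => [II'|I'I].
  + by exists I' => //; apply: idealD hI' _ I'y; apply: II'.
  + by exists I => //; apply: idealD hI Ix _; apply: I'I.
- move=> a x ha [I FI Ix]; exists I => //.
  by case: (FP I FI) => hI _ _; apply: idealM hI ha Ix.
Qed.

Lemma exists_maximal_ideal_over A J :
  proper_ideal_over A J J ->
  exists2 M, proper_ideal_over A J M & forall I, proper_ideal_over A J I ->
    (forall x, M x -> I x) -> forall x, I x -> M x.
Proof.
(* [Zorn_bigcup] also asks for the union of the empty chain, hence the empty set in [Pd]. *)
move=> hJ; pose Pd I := (forall x, ~ I x) \/ proper_ideal_over A J I.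
have [M [PM Mmax]] : exists M, Pd M /\ forall B, classical_sets.proper M B -> ~ Pd B.
  apply: classical_sets.Zorn_bigcup => F FP Ftot.
  have [[I0 [FI0 gI0]]|no_proper] := classic (exists I, F I /\ proper_ideal_over A J I).
    pose G I := F I /\ proper_ideal_over A J I.
    have -> : classical_sets.bigcup F id = classical_sets.bigcup G id.
      apply: boolp.funext => x; apply: boolp.propext.
      split => -[I FI Ix]; last by exists I; case: FI.
      by exists I => //; split => //; case: (FP I FI) => // /(_ x).
    right; apply: proper_ideal_over_chain => [I []//|I I' [FI _] [FI' _]|]; last by exists I0.
    exact: Ftot.
  left=> x [I FI Ix]; case: (FP I FI) => [/(_ x)//|gI].
  by apply: no_proper; exists I.
have gM : proper_ideal_over A J M.
  case: PM => // noM; exfalso; apply: (Mmax J); last by right.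
  case: hJ => hI _ _; split => [x /noM [] | /(_ 0 (ideal0 hI))].
  exact: noM.
exists M => // I gI MI; apply: NNPP => nIM; apply: (Mmax I); last by right.
by split.
Qed.

Lemma prime_ideal_over A J :
  subring A -> is_ideal A J -> ~ J 1 -> exists2 P, prime_ideal A P & forall x, J x -> P x.
Proof.
move=> hA hJ nJ1.
have [M [hM nM1 JM] Mmax] := exists_maximal_ideal_over (And3 hJ nJ1 (fun _ => id)).
exists M => //; split => // x y hx hy Mxy; apply: NNPP => /not_or_and [nMx nMy].
have adjoin1 z : A z -> ~ M z -> adjoin_ideal A M z 1.
  move=> hz nMz; apply: NNPP => n1; apply: nMz.
  apply: (Mmax (adjoin_ideal A M z)); last exact: adjoin_ideal_mem.
    split; [exact: adjoin_ideal_is_ideal | exact: n1 |].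
    by move=> w /JM; apply: adjoin_ideal_sub.
  by move=> w; apply: adjoin_ideal_sub.
have [m1 [s1 [hm1 hs1 e1]]] := adjoin1 x hx nMx.
have [m2 [s2 [hm2 hs2 e2]]] := adjoin1 y hy nMy.
apply: nM1; have -> : 1 = m1 * (m2 + y * s2) + (x * s1) * m2 + (s1 * s2) * (x * y).
  by rewrite -[LHS]mulr1 {1}e1 {1}e2; ring.
apply: (idealD hM); first apply: (idealD hM).
- by apply: (idealMr hM) hm1; rewrite -e2; apply: subring1.
- by apply: (idealM hM) hm2; apply: subringM.
- by apply: (idealM hM) Mxy; apply: subringM.
Qed.

Lemma prime_ideal_contract R S M :
  subring R -> (forall y, R y -> S y) -> prime_ideal S M ->
  prime_ideal R (fun y => M y /\ R y).
Proof.
move=> hR RS [hM nM1 hMM]; split; last 2 first.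
- by case.
- by move=> y z Ry Rz [/(hMM _ _ (RS _ Ry) (RS _ Rz)) [] Mu _]; [left|right].
split.
- by move=> y [].
- by split; [apply: ideal0 hM | apply: subring0].
- by move=> y z [My Ry] [Mz Rz]; split; [apply: (idealD hM) | apply: subringD].
- by move=> a y Ra [My Ry]; split; [apply: (idealM hM) (RS _ Ra) My | apply: subringM].
Qed.

Lemma going_down_contract R S p M :
  subring R -> overring R S -> going_down R S -> prime_ideal R p -> prime_ideal S M ->
  (forall y, p y -> M y) -> exists2 P, prime_ideal S P & forall y, P y /\ R y <-> p y.
Proof.
move=> hR [hS RS] gd hp hM pM.
have hq := prime_ideal_contract hR RS hM.
have pq y : p y -> M y /\ R y.
  by move=> py; split; [apply: pM | case: hp => hpI _ _; apply: ideal_sub hpI py].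
by have [P [hP _ PR]] := gd _ _ M hp hq pq hM (fun y => conj id id); exists P.
Qed.

(* [ext_proper S p] is [~ extended_ideal S p 1] by unfolding. *)
Definition extended_ideal S p z := exists n (ps ss : 'I_n -> K),
  [/\ forall i, p (ps i), forall i, S (ss i) & \sum_(i < n) ps i * ss i = z].

Lemma extended_ideal_sub S p y : subring S -> p y -> extended_ideal S p y.
Proof.
move=> hS py; exists 1%N, (fun _ => y), (fun _ => 1).
by rewrite big_ord1 mulr1; split => // _; apply: subring1.
Qed.

Lemma extended_ideal_is_ideal R S p :
  subring S -> (forall y, R y -> S y) -> is_ideal R p -> is_ideal S (extended_ideal S p).
Proof.
move=> hS RS hp; split.
- move=> z [n [ps [ss [hps hss <-]]]].
  apply: (big_ind S) => [|u v|i _]; [exact: subring0 | exact: subringD |].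
  by apply: subringM => //; apply: RS; apply: ideal_sub hp (hps i).
- by apply: extended_ideal_sub => //; apply: ideal0 hp.
- move=> z z' [n [ps [ss [hps hss <-]]]] [m [ps' [ss' [hps' hss' <-]]]].
  pose cat (F G : _ -> K) (i : 'I_(n + m)) :=
    match split i with inl j => F j | inr j => G j end.
  exists (n + m)%N, (cat ps ps'), (cat ss ss'); split.
  + by move=> i; rewrite /cat; case: (split i).
  + by move=> i; rewrite /cat; case: (split i).
  + rewrite big_split_ord /=; congr (_ + _); apply: eq_bigr => i _.
    * by rewrite /cat (unsplitK (inl _ i)).
    * by rewrite /cat (unsplitK (inr _ i)).
- move=> a z Sa [n [ps [ss [hps hss <-]]]].
  exists n, ps, (fun i => a * ss i); split => [//|i|]; first exact: subringM.
  by rewrite mulr_sumr; apply: eq_bigr => i _; rewrite mulrCA.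
Qed.

Lemma ext_proper_sub_prime S p M :
  prime_ideal S M -> (forall y, p y -> M y) -> ext_proper S p.
Proof.
move=> [hM nM1 _] pM [n [ps [ss [hps hss e]]]]; apply: nM1; rewrite -e.
by apply: (ideal_sum hM) => i; apply: (idealMr hM) (hss i) (pM _ (hps i)).
Qed.

Lemma overring_sub_localization R S p x :
  subring R -> overring R S -> going_down R S -> prime_ideal R p ->
  valuation_domain (localization R p) -> ext_proper S p -> S x -> localization R p x.
Proof.
move=> hR hO gd hp hv pS Sx; have [hS RS] := hO; have [hpI _ _] := hp.
have [M hM pSM] := prime_ideal_over hS (extended_ideal_is_ideal hS RS hpI) pS.
have pM y : p y -> M y by move=> py; apply/pSM/extended_ideal_sub.
have [P [hP _ _] PR] := going_down_contract hR hO gd hp hM pM.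
apply: NNPP => nx; have [a [b [Ra pa Rb npb eb]]] := valuation_notin_inv hR hp hv nx.
apply: npb; apply/PR; split => //; rewrite -eb.
by apply: (idealMr hP) Sx _; case/PR: pa.
Qed.

Definition loc_conductor_radical R p x r :=
  R r /\ exists k, localization R p (r ^+ k * x).

Lemma loc_conductor_radical_prime R p x :
  subring R -> prime_ideal R p -> valuation_domain (localization R p) ->
  ~ localization R p x -> prime_ideal R (loc_conductor_radical R p x).
Proof.
move=> hR hp hv nx; have loc1 : localization R p 1 by apply: localization_sub (subring1 hR).
have Q0 : loc_conductor_radical R p x 0.
  split; first exact: subring0.
  by exists 1%N; rewrite expr1 mul0r; apply: localization_sub (subring0 hR).
split; last 2 first.
- by case=> _ [k]; rewrite expr1n mul1r.
- move=> r s Rr Rs [_ [k hk]].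
  have [->|r0] := eqVneq r 0; first by left.
  have [->|s0] := eqVneq s 0; first by right.
  have [t ht [er|es]] := valuation_comparable hv r0 s0; [left|right]; split => //;
    exists (k + k)%N.
  + have -> : r ^+ (k + k) * x = t ^+ k * ((r * s) ^+ k * x).
      by rewrite {1 2}er exprD !exprMn; ring.
    by apply: localizationM => //; apply: localizationX.
  + have -> : s ^+ (k + k) * x = t ^+ k * ((r * s) ^+ k * x).
      by rewrite {1 2}es exprD !exprMn; ring.
    by apply: localizationM => //; apply: localizationX.
split => //.
- by move=> r [].
- move=> r s [Rr [k hk]] [Rs [m hm]]; split; first exact: subringD.
  have [->|r0] := eqVneq r 0; first by rewrite add0r; exists m.
  have [->|s0] := eqVneq s 0; first by rewrite addr0; exists k.
  have [t ht [->|->]] := valuation_comparable hv r0 s0.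
  + exists m; rewrite -{2}[s]mul1r -mulrDl exprMn -mulrA.
    by apply: localizationM => //; apply/localizationX/localizationD.
  + exists k; rewrite -{1}[r]mul1r -mulrDl exprMn -mulrA.
    by apply: localizationM => //; apply/localizationX/localizationD.
- move=> a r Ra [Rr [k hk]]; split; first exact: subringM.
  exists k; rewrite exprMn -mulrA; apply: localizationM => //.
  by apply: localization_sub => //; apply: subringX.
Qed.

Lemma loc_conductor_radical_sub R p x r :
  subring R -> prime_ideal R p -> ~ localization R p x ->
  loc_conductor_radical R p x r -> p r.
Proof.
move=> hR hp nx [Rr [k hk]]; apply: NNPP => npr; apply: nx.
have npk := prime_notinX (k := k) hR hp Rr npr.
have -> : x = (r ^+ k)^-1 * (r ^+ k * x) by rewrite mulKf // (prime_notin_neq0 hp).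
by apply: localizationM => //; apply: localizationV => //; apply: subringX.
Qed.

(* The radical of [R_p :_R x] is a nonzero prime inside [p], hence equals [p]. *)
Lemma height_one_localization_mulX R p c x :
  subring R -> height_one R p -> valuation_domain (localization R p) -> p c ->
  exists k, localization R p (c ^+ k * x).
Proof.
move=> hR [hp _ hmin] hv pc; have [hx|nx] := classic (localization R p x).
  by exists 0%N; rewrite expr0 mul1r.
have [a [b [Ra pa Rb npb eb]]] := valuation_notin_inv hR hp hv nx.
have Qa : loc_conductor_radical R p x a.
  by split => //; exists 1%N; rewrite expr1 eb; apply: localization_sub.
have [Q0|pQ] := hmin _ (loc_conductor_radical_prime hR hp hv nx)
  (fun r => loc_conductor_radical_sub hR hp nx).
- by move: (prime_notin_neq0 hp npb); rewrite -eb (Q0 _ Qa) mul0r eqxx.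
- by case: (pQ _ pc).
Qed.

Definition colon S x w := S w /\ S (w * x).

Lemma colon_is_ideal S x : subring S -> is_ideal S (colon S x).
Proof.
move=> hS; split.
- by move=> w [].
- by rewrite /colon mul0r; split; apply: subring0.
- by move=> w w' [Sw Swx] [Sw' Sw'x]; split; rewrite ?mulrDl; apply: subringD.
- by move=> a w Sa [Sw Swx]; split; rewrite -?mulrA; apply: subringM.
Qed.

Lemma local_multiplier R S M P x :
  subring R -> overring R S -> prime_ideal S M -> height_one R P ->
  valuation_domain (localization R P) -> (ext_proper S P -> localization R P x) ->
  exists c, [/\ R c, ~ M c & localization R P (c * x)].
Proof.
move=> hR [hS RS] hM hP hv hx; have [hPp _ _] := hP.
have [PM|/boolp.existsNP [d /boolp.not_implyP [Pd nMd]]] :=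
  classic (forall y, P y -> M y).
  exists 1; rewrite mul1r; split; [exact: subring1 | by case: hM |].
  exact/hx/(ext_proper_sub_prime hM).
have Rd : R d by case: hPp => hPI _ _; apply: ideal_sub hPI Pd.
have [k hk] := height_one_localization_mulX x hR hP hv Pd.
exists (d ^+ k); split=> //; first exact: subringX.
exact: prime_notinX hS hM (RS _ Rd) nMd.
Qed.

Lemma generalized_Krull_multiplier R S M b x :
  subring R -> generalized_Krull R -> overring R S -> prime_ideal S M ->
  R b -> b != 0 -> (forall P, height_one R P -> ext_proper S P -> localization R P x) ->
  exists c, [/\ R c, ~ M c & forall P, height_one R P -> P b -> localization R P (c * x)].
Proof.
move=> hR [_ finite_primes valuation] hO hM Rb b0 hx; have [hS RS] := hO.
have [n [f hf]] := finite_primes b Rb b0.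
pose N c := R c /\ ~ M c.
pose Q i c := forall P, height_one R P -> (forall y, P y <-> f i y) ->
  localization R P (c * x).
have N1 : N 1 by split; [apply: subring1 | case: hM].
have NM c d : N c -> N d -> N (c * d).
  move=> [Rc nMc] [Rd nMd]; split; first exact: subringM.
  by case: hM => _ _ /(_ _ _ (RS _ Rc) (RS _ Rd)) /[apply] -[].
have QM i c d : N d -> Q i c -> Q i (d * c).
  move=> [Rd _] Qc P hP ePf; have [hPp _ _] := hP; rewrite -mulrA.
  by apply: localizationM => //; [apply: localization_sub | apply: Qc].
have Qi i : (i < n)%N -> exists c, N c /\ Q i c.
  move=> _; have [[P0 [hP0 eP0]]|noP] :=
    classic (exists P0, height_one R P0 /\ forall y, P0 y <-> f i y); last first.
    by exists 1; split=> // P hP ePf; case: noP; exists P.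
  have [c [Rc nMc cx]] := local_multiplier hR hO hM hP0 (valuation P0 hP0) (hx P0 hP0).
  exists c; split=> // P hP ePf; apply: localization_ext cx => y.
  by rewrite ePf eP0.
have [c [[Rc nMc] Qc]] := common_multiplier N1 NM QM Qi.
exists c; split=> // P hP Pb; have [i lt_in ePf] := hf P hP Pb.
exact: Qc lt_in P hP ePf.
Qed.

Lemma localization_meet_sub_overring R S x :
  subring R -> frac_field_of R -> generalized_Krull R -> overring R S ->
  (forall P, height_one R P -> ext_proper S P -> localization R P x) -> S x.
Proof.
move=> hR hfrac hKrull hO hx; have [hS RS] := hO; apply: NNPP => nSx.
have n1x : ~ colon S x 1 by rewrite /colon mul1r => -[].
have [M hM colonM] := prime_ideal_over hS (colon_is_ideal x hS) n1x.
have [a [b [Ra Rb b0 ex]]] := hfrac x.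
have [c [Rc nMc hc]] := generalized_Krull_multiplier hR hKrull hO hM Rb b0 hx.
have Rcx : R (c * x).
  case: hKrull => inter _ _; apply: inter => P hP; have [hPp _ _] := hP.
  have [Pb|nPb] := classic (P b); first exact: hc.
  by apply: localizationM => //; [apply: localization_sub | exists a, b].
by apply: nMc; apply: colonM; split; apply: RS.
Qed.

End IdealsInAField.

Theorem proposition6p3 (K : fieldType) (R S : K -> Prop) :
  subring R -> frac_field_of R -> generalized_Krull R ->
  overring R S -> going_down R S ->
  forall x : K,
    S x <-> (forall P, height_one R P -> ext_proper S P -> localization R P x).
Proof.
move=> hR hfrac hKrull hO gd x; split => [Sx P hP pS | ].
- have [hPp _ _] := hP; have [_ _ valuation] := hKrull.
  exact: overring_sub_localization hR hO gd hPp (valuation P hP) pS Sx.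
- exact: localization_meet_sub_overring.
Qed.
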